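(* Let $\mathbb F=\mathbb R$ or $\mathbb C$, $G$ an algebraic group over $\mathbb F$ and $\rho:G\to\mathrm{GL}(V)$ a rational representation on an $n$-dimensional space with $\rho(G)\subseteq\mathrm{SL}(V)$, and $0<k<n$. Let $U\subseteq V\otimes\mathbb F^k$ and $\pi_{k,V}$ be as below. Then for every $T\in U$ there is an isomorphism of algebraic groups $\mathrm{Stab}_G(\pi_{k,V}(T))\cong\mathrm{Stab}_{G\times\mathrm{SL}_k}(T)$.
   Context: $U=\{\sum_{i=1}^kv_i\otimes e_i: v_1,\dots,v_k\in V\text{ linearly independent}\}$, $e_i$ the standard basis of $\mathbb F^k$; $\pi_{k,V}(\sum_iv_i\otimes e_i)=v_1\wedge\cdots\wedge v_k\in\bigwedge^kV$. $G$ acts on $\bigwedge^kV$ via $\rho$, and $G\times\mathrm{SL}_k$ acts on $V\otimes\mathbb F^k$ by $(g,A)\cdot(v\otimes w)=\rho(g)v\otimes Aw$. *)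

From HB Require Import structures.
From mathcomp Require Import all_boot all_order all_algebra.
From mathcomp Require Import reals.
From mathcomp Require Import complex.
From mathcomp Require Import mpoly.

Set Implicit Arguments.
Unset Strict Implicit.
Unset Printing Implicit Defensive.

Import Order.TTheory GRing.Theory Num.Theory.
Local Open Scope ring_scope.

Inductive RC := RealField | ComplexField.

Definition FF (R : realType) (c : RC) : fieldType :=
  match c with
  | RealField => (R : fieldType)
  | ComplexField => ((R[i])%C : fieldType)
  end.

Section Defs.
Variable F : fieldType.

Definition mx_coords (m : nat) (g : 'M[F]_m) : 'I_(m * m) -> F :=
  fun i => mxvec g 0 i.

Definition zariski_closed_GL (m : nat) (G : 'M[F]_m -> Prop) : Prop :=
  exists S : {mpoly F[m * m]} -> Prop,
    forall g, G g <-> (g \in unitmx /\ forall p, S p -> p.@[mx_coords g] = 0).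

Definition alg_group (m : nat) (G : 'M[F]_m -> Prop) : Prop :=
  [/\ zariski_closed_GL G, G 1%:M,
      (forall g h, G g -> G h -> G (g *m h)) &
      (forall g, G g -> G (invmx g))].

Definition regular1 (m : nat) (H : 'M[F]_m -> Prop) (f : 'M[F]_m -> F) : Prop :=
  exists (p : {mpoly F[m * m]}) (N : nat),
    forall g, H g -> f g = p.@[mx_coords g] / (\det g) ^+ N.

Definition regular2 (m k : nat) (H : 'M[F]_m * 'M[F]_k -> Prop)
    (f : 'M[F]_m * 'M[F]_k -> F) : Prop :=
  exists (p : {mpoly F[m * m + k * k]}) (N1 N2 : nat),
    forall x, H x ->
      f x = p.@[fun i => row_mx (mxvec x.1) (mxvec x.2) 0 i]
            / ((\det x.1) ^+ N1 * (\det x.2) ^+ N2).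

Definition rational_rep (m n : nat) (G : 'M[F]_m -> Prop)
    (rho : 'M[F]_m -> 'M[F]_n) : Prop :=
  [/\ (forall g, G g -> rho g \in unitmx),
      (forall g h, G g -> G h -> rho (g *m h) = rho g *m rho h) &
      (forall i j, regular1 G (fun g => rho g i j))].

(* Exterior power bigwedge^k V, V = F^n, modelled as alternating k-tensors:
   an element is its coefficient function on basis tensors e_{f 0} (x) ... (x) e_{f (k-1)}. *)
Definition extpow (n k : nat) := {ffun {ffun 'I_k -> 'I_n} -> F}.

(* pi_{k,V}: the matrix T with columns v_1..v_k (i.e. sum v_i (x) e_i) |-> v_1 /\ ... /\ v_k *)
Definition wedge (n k : nat) (T : 'M[F]_(n, k)) : extpow n k :=
  [ffun f : {ffun 'I_k -> 'I_n} => \det (rowsub (fun i => f i) T)].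

(* induced action of A in GL(V) on bigwedge^k V (restriction of A^{(x) k}) *)
Definition extpow_act (n k : nat) (A : 'M[F]_n) (w : extpow n k) : extpow n k :=
  [ffun f : {ffun 'I_k -> 'I_n} => \sum_(h : {ffun 'I_k -> 'I_n}) (\prod_(i < k) A (f i) (h i)) * w h].

(* U: tensors sum v_i (x) e_i with v_1..v_k linearly independent *)
Definition U_set (n k : nat) (T : 'M[F]_(n, k)) : Prop := \rank T = k.

Definition stab_wedge (m n k : nat) (G : 'M[F]_m -> Prop) (rho : 'M[F]_m -> 'M[F]_n)
    (T : 'M[F]_(n, k)) : 'M[F]_m -> Prop :=
  fun g => G g /\ extpow_act (rho g) (wedge T) = wedge T.

(* the action (g, A) . (v (x) w) = rho g v (x) A w on V (x) F^k = n x k matrices: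
   T |-> rho g *m T *m A^T *)
Definition tensor_act (m n k : nat) (rho : 'M[F]_m -> 'M[F]_n)
    (x : 'M[F]_m * 'M[F]_k) (T : 'M[F]_(n, k)) : 'M[F]_(n, k) :=
  rho x.1 *m T *m (x.2)^T.

Definition stab_tensor (m n k : nat) (G : 'M[F]_m -> Prop) (rho : 'M[F]_m -> 'M[F]_n)
    (T : 'M[F]_(n, k)) : 'M[F]_m * 'M[F]_k -> Prop :=
  fun x => [/\ G x.1, \det x.2 = 1 & tensor_act rho x T = T].

Definition pair_mul (m k : nat) (x y : 'M[F]_m * 'M[F]_k) : 'M[F]_m * 'M[F]_k :=
  (x.1 *m y.1, x.2 *m y.2).

Definition alg_group_iso (m k : nat) (H1 : 'M[F]_m -> Prop)
    (H2 : 'M[F]_m * 'M[F]_k -> Prop) : Prop :=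
  exists (phi : 'M[F]_m -> 'M[F]_m * 'M[F]_k) (psi : 'M[F]_m * 'M[F]_k -> 'M[F]_m),
    [/\ (forall x, H1 x -> H2 (phi x)),
        (forall y, H2 y -> H1 (psi y)),
        (forall x, H1 x -> psi (phi x) = x),
        (forall y, H2 y -> phi (psi y) = y) &
        (forall x y, H1 x -> H1 y -> phi (x *m y) = pair_mul (phi x) (phi y))] /\
    [/\ (forall i j, regular1 H1 (fun x => (phi x).1 i j)),
        (forall i j, regular1 H1 (fun x => (phi x).2 i j)) &
        (forall i j, regular2 H2 (fun y => psi y i j))].

End Defs.

From HB Require Import structures.
From mathcomp Require Import all_boot all_order all_algebra.
From mathcomp Require Import reals.
From mathcomp Require Import complex.
From mathcomp Require Import mpoly.
Import Order.TTheory GRing.Theory Num.Theory.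
Local Open Scope ring_scope.
Set Implicit Arguments.
Unset Strict Implicit.

(* If [g] stabilises [w = v_1 /\ ... /\ v_k], where [T = (v_1 ... v_k)] has full
   rank, then [rho g *m T = T *m B] with [\det B = 1]: after normalising [T] by an
   invertible [k x k] minor [M], the entries of [T M^-1] are Pluecker coordinates of
   [w / \det M], so any [S] with the same wedge satisfies [S N^-1 = T M^-1] with
   [\det N = \det M].  Then [g |-> (g, (B^-1)^T)] is inverse to the first projection
   of [Stab_(G x SL_k)(T)].  Since [B = L *m rho g *m T] for a fixed left inverse [L]
   of [T] and [B^-1 = \adj B], both maps are regular. *)

Section FunctionSubring.
Variables (X : Type) (R : comPzRingType) (P : (X -> R) -> Prop).
Hypothesis P_ext : forall f f', (forall x, f x = f' x) -> P f' -> P f.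
Hypothesis P_cst : forall c, P (fun _ => c).
Hypothesis P_add : forall f1 f2, P f1 -> P f2 -> P (fun x => f1 x + f2 x).
Hypothesis P_mul : forall f1 f2, P f1 -> P f2 -> P (fun x => f1 x * f2 x).

Lemma fun_subring_sum (I : Type) (r : seq I) (f : I -> X -> R) :
  (forall i, P (f i)) -> P (fun x => \sum_(i <- r) f i x).
Proof.
move=> Pf; elim: r => [|i r IHr].
  by apply: P_ext (P_cst 0) => x; rewrite big_nil.
by apply: P_ext (P_add (Pf i) IHr) => x; rewrite big_cons.
Qed.

Lemma fun_subring_prod (I : Type) (r : seq I) (f : I -> X -> R) :
  (forall i, P (f i)) -> P (fun x => \prod_(i <- r) f i x).
Proof.
move=> Pf; elim: r => [|i r IHr].
  by apply: P_ext (P_cst 1) => x; rewrite big_nil.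
by apply: P_ext (P_mul (Pf i) IHr) => x; rewrite big_cons.
Qed.

Lemma fun_subring_det q (A : X -> 'M[R]_q) :
  (forall i j, P (fun x => A x i j)) -> P (fun x => \det (A x)).
Proof.
move=> PA; apply: fun_subring_sum => s.
by apply: P_mul => //; apply: fun_subring_prod.
Qed.

Lemma fun_subring_mulmx p q r (A : X -> 'M[R]_(p, q)) (B : X -> 'M[R]_(q, r)) :
  (forall i j, P (fun x => A x i j)) -> (forall i j, P (fun x => B x i j)) ->
  forall i j, P (fun x => (A x *m B x) i j).
Proof.
move=> PA PB i j; apply: P_ext (fun_subring_sum _ (fun l => P_mul (PA i l) (PB l j))).
by move=> x; rewrite mxE.
Qed.

End FunctionSubring.

Section PolynomialFunctions.
Variables (F : fieldType) (m : nat).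

Definition mx_polynomial (f : 'M[F]_m -> F) :=
  exists p : {mpoly F[m * m]}, forall g, f g = p.@[mx_coords g].

Lemma mx_polynomial_ext f f' :
  (forall g, f g = f' g) -> mx_polynomial f' -> mx_polynomial f.
Proof. by move=> e [p Hp]; exists p => g; rewrite e Hp. Qed.

Lemma mx_polynomial_cst c : mx_polynomial (fun _ => c).
Proof. by exists c%:MP => g; rewrite mevalC. Qed.

Lemma mx_polynomialD f1 f2 :
  mx_polynomial f1 -> mx_polynomial f2 -> mx_polynomial (fun g => f1 g + f2 g).
Proof. by move=> [p1 H1] [p2 H2]; exists (p1 + p2) => g; rewrite mevalD H1 H2. Qed.

Lemma mx_polynomialM f1 f2 :
  mx_polynomial f1 -> mx_polynomial f2 -> mx_polynomial (fun g => f1 g * f2 g).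
Proof. by move=> [p1 H1] [p2 H2]; exists (p1 * p2) => g; rewrite mevalM H1 H2. Qed.

Lemma mx_polynomial_entry i j : mx_polynomial (fun g => g i j).
Proof. by exists 'X_(mxvec_index i j) => g; rewrite mevalXU /mx_coords mxvecE. Qed.

Lemma mx_polynomial_det : mx_polynomial (fun g => \det g).
Proof.
apply: fun_subring_det mx_polynomial_entry.
- exact: mx_polynomial_ext.
- exact: mx_polynomial_cst.
- exact: mx_polynomialD.
- exact: mx_polynomialM.
Qed.

End PolynomialFunctions.

Section RegularFunctions.
Variables (F : fieldType) (m : nat) (H : 'M[F]_m -> Prop).

Lemma regular1_ext f f' :
  (forall g, H g -> f g = f' g) -> regular1 H f' -> regular1 H f.
Proof. by move=> e [p [N Hp]]; exists p, N => g Hg; rewrite e // Hp. Qed.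

Lemma regular1_polynomial f : mx_polynomial f -> regular1 H f.
Proof. by move=> [p Hp]; exists p, 0%N => g _; rewrite expr0 divr1 Hp. Qed.

Lemma regular1_cst c : regular1 H (fun _ => c).
Proof. exact/regular1_polynomial/mx_polynomial_cst. Qed.

Lemma regular1_entry i j : regular1 H (fun g => g i j).
Proof. exact/regular1_polynomial/mx_polynomial_entry. Qed.

Lemma regular1M f1 f2 :
  regular1 H f1 -> regular1 H f2 -> regular1 H (fun g => f1 g * f2 g).
Proof.
move=> [p1 [N1 H1]] [p2 [N2 H2]]; exists (p1 * p2), (N1 + N2)%N => g Hg.
by rewrite H1 // H2 // mulf_div exprD mevalM.
Qed.

Hypothesis H_det : forall g, H g -> \det g != 0.

Lemma regular1D f1 f2 :
  regular1 H f1 -> regular1 H f2 -> regular1 H (fun g => f1 g + f2 g).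
Proof.
move=> [p1 [N1 H1]] [p2 [N2 H2]]; have [D HD] := mx_polynomial_det F m.
exists (p1 * D ^+ N2 + p2 * D ^+ N1), (N1 + N2)%N => g Hg.
rewrite H1 // H2 // addf_div ?expf_neq0 ?H_det // exprD.
by rewrite mevalD !mevalM !rmorphXn /= -HD.
Qed.

Lemma regular1_det q (A : 'M[F]_m -> 'M[F]_q) :
  (forall i j, regular1 H (fun g => A g i j)) -> regular1 H (fun g => \det (A g)).
Proof.
apply: fun_subring_det => [f f' e||f1 f2|f1 f2].
- by apply: regular1_ext => g _.
- exact: regular1_cst.
- exact: regular1D.
- exact: regular1M.
Qed.

Lemma regular1_mulmx p q r (A : 'M[F]_m -> 'M[F]_(p, q)) (B : 'M[F]_m -> 'M[F]_(q, r)) :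
  (forall i j, regular1 H (fun g => A g i j)) ->
  (forall i j, regular1 H (fun g => B g i j)) ->
  forall i j, regular1 H (fun g => (A g *m B g) i j).
Proof.
apply: fun_subring_mulmx => [f f' e||f1 f2|f1 f2].
- by apply: regular1_ext => g _.
- exact: regular1_cst.
- exact: regular1D.
- exact: regular1M.
Qed.

End RegularFunctions.

Lemma sub_regular1 (F : fieldType) m (H H' : 'M[F]_m -> Prop) f :
  (forall g, H' g -> H g) -> regular1 H f -> regular1 H' f.
Proof. by move=> sH'H [p [N Hp]]; exists p, N => g /sH'H; apply: Hp. Qed.

Section Wedge.
Variables (F : fieldType) (n k : nat).

Lemma wedge_mulmxr (T : 'M[F]_(n, k)) (C : 'M[F]_k) :
  wedge (T *m C) = [ffun f => \det C * wedge T f].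
Proof. by apply/ffunP => f; rewrite !ffunE -mul_rowsub_mx det_mulmx mulrC. Qed.

Lemma extpow_act_wedge (A : 'M[F]_n) (T : 'M[F]_(n, k)) :
  extpow_act A (wedge T) = wedge (A *m T).
Proof.
apply/ffunP => f; rewrite !ffunE /determinant.
under eq_bigr do rewrite ffunE.
under [RHS]eq_bigr => s _.
  under eq_bigr => i _ do rewrite !mxE.
  rewrite bigA_distr_bigA big_distrr /=.
  over.
rewrite exchange_big /=; apply: eq_bigr => h _.
rewrite big_distrr /=; apply: eq_bigr => s _.
rewrite big_split /= mulrCA; congr (_ * (_ * _)).
by apply: eq_bigr => i _; rewrite mxE.
Qed.

Lemma eq_cofactor_row' (A B : 'M[F]_k) i j :
  row' i A = row' i B -> cofactor A i j = cofactor B i j.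
Proof.
move=> /matrixP eAB; rewrite /cofactor; congr (_ * \det _).
by apply/matrixP => a b; have := eAB a (lift j b); rewrite !mxE.
Qed.

Lemma wedge_unit_minor_entry (X : 'M[F]_(n, k)) (f0 : {ffun 'I_k -> 'I_n}) r i :
  rowsub (fun t => f0 t) X = 1%:M ->
  wedge X [ffun t => if t == i then r else f0 t] = X r i.
Proof.
move=> X_f0; rewrite ffunE; set E := rowsub _ X.
have cofE j : cofactor E i j = (j == i)%:R.
  rewrite (@eq_cofactor_row' E 1%:M).
    by have := congr1 (fun M : 'M[F]_k => M j i) (adj1 F k); rewrite /= !mxE.
  apply/matrixP => a b; rewrite !mxE ffunE.
  rewrite eq_sym (negbTE (neq_lift i a)).
  by have := congr1 (fun M : 'M[F]_k => M (lift i a) b) X_f0; rewrite !mxE.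
rewrite (expand_det_row E i) (bigD1 i) //= big1 => [|j /negbTE ji].
  by rewrite cofE eqxx mulr1 addr0 /E mxE ffunE eqxx.
by rewrite cofE ji mulr0.
Qed.

End Wedge.

Section UnitMinor.
Variables (F : fieldType) (n k : nat).

Lemma full_rank_unit_minor (T : 'M[F]_(n, k)) : \rank T = k ->
  exists f0 : {ffun 'I_k -> 'I_n}, rowsub (fun t => f0 t) T \in unitmx.
Proof.
move=> rkT.
have : exists g : 'I_(\rank T) -> 'I_n, row_free (rowsub g T).
  by exists (maxrankfun T); apply: maxrowsub_free.
rewrite rkT => -[g free_gT]; exists [ffun t => g t].
rewrite -row_free_unit; congr (row_free _): free_gT.
by apply/matrixP => a b; rewrite !mxE ffunE.
Qed.

Variable f0 : {ffun 'I_k -> 'I_n}.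
Local Notation minor X := (rowsub (fun t => f0 t) X).

Definition minor_linv (T : 'M[F]_(n, k)) := invmx (minor T) *m minor 1%:M.

Lemma minor_linv_mulmx (T S : 'M[F]_(n, k)) :
  minor_linv T *m S = invmx (minor T) *m minor S.
Proof. by rewrite -mulmxA mul_rowsub_mx mul1mx. Qed.

Lemma minor_linvK (T : 'M[F]_(n, k)) : minor T \in unitmx -> minor_linv T *m T = 1%:M.
Proof. by move=> uT; rewrite minor_linv_mulmx mulVmx. Qed.

Lemma eq_wedge_unit_minor (X Y : 'M[F]_(n, k)) :
  minor X = 1%:M -> minor Y = 1%:M -> wedge X = wedge Y -> X = Y.
Proof.
move=> X1 Y1 eXY; apply/matrixP => r i.
by rewrite -(wedge_unit_minor_entry r i X1) -(wedge_unit_minor_entry r i Y1) eXY.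
Qed.

Lemma eq_wedge_mulmx (T S : 'M[F]_(n, k)) : minor T \in unitmx -> wedge S = wedge T ->
  S = T *m (minor_linv T *m S) /\ \det (minor_linv T *m S) = 1.
Proof.
move=> uT eST; set M := minor T; set N := minor S.
have detNM : \det N = \det M.
  by have := congr1 (fun w : extpow F n k => w f0) eST; rewrite !ffunE.
have detM : \det M != 0 by rewrite -unitfE -unitmxE.
have uN : N \in unitmx by rewrite unitmxE detNM unitfE.
rewrite minor_linv_mulmx det_mulmx det_inv detNM mulVf //; split => //.
suff e : T *m invmx M = S *m invmx N by rewrite mulmxA e mulmxKV.
apply: eq_wedge_unit_minor; rewrite -?mul_rowsub_mx ?mulmxV //.
by rewrite !wedge_mulmxr !det_inv detNM eST.
Qed.

End UnitMinor.

Lemma invmxM (F : fieldType) k (A B : 'M[F]_k) :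
  A \in unitmx -> B \in unitmx -> invmx (A *m B) = invmx B *m invmx A.
Proof.
move=> uA uB; have uAB : A *m B \in unitmx by rewrite unitmx_mul uA.
have inv_AB : (invmx B *m invmx A) *m (A *m B) = 1%:M.
  by rewrite -!mulmxA (mulmxA (invmx A)) mulVmx // mul1mx mulVmx.
by rewrite -[LHS]mul1mx -inv_AB -mulmxA mulmxV // mulmx1.
Qed.

Lemma det1_invmx (F : fieldType) k (A : 'M[F]_k) : \det A = 1 -> invmx A = \adj A.
Proof. by move=> detA; rewrite /invmx unitmxE detA unitr1 invr1 scale1r. Qed.

Section Stabilizers.
Variables (F : fieldType) (m n k : nat).
Variables (G : 'M[F]_m -> Prop) (rho : 'M[F]_m -> 'M[F]_n).
Hypothesis G_unit : forall g, G g -> g \in unitmx.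
Hypothesis rhoM : forall g h, G g -> G h -> rho (g *m h) = rho g *m rho h.
Hypothesis rho_regular : forall i j, regular1 G (fun g => rho g i j).
Variables (T : 'M[F]_(n, k)) (f0 : {ffun 'I_k -> 'I_n}).
Hypothesis T_minor : rowsub (fun t => f0 t) T \in unitmx.

Local Notation stabW := (stab_wedge G rho T).
Local Notation stabT := (stab_tensor G rho T).

Definition stab_coef g := minor_linv f0 T *m rho g *m T.

Lemma stab_wedge_coef g :
  stabW g -> rho g *m T = T *m stab_coef g /\ \det (stab_coef g) = 1.
Proof.
by move=> [_]; rewrite extpow_act_wedge /stab_coef -mulmxA; apply: eq_wedge_mulmx.
Qed.

Lemma stab_coef_unit g : stabW g -> stab_coef g \in unitmx.
Proof. by move=> /stab_wedge_coef[_ detB]; rewrite unitmxE detB unitr1. Qed.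

Lemma stab_coefM g h :
  stabW g -> stabW h -> stab_coef (g *m h) = stab_coef g *m stab_coef h.
Proof.
move=> Wg Wh; have [[Gg _] [Gh _]] := (Wg, Wh).
have [eg _] := stab_wedge_coef Wg; have [eh _] := stab_wedge_coef Wh.
rewrite /stab_coef rhoM // -mulmxA -(mulmxA (rho g)) eh (mulmxA (rho g)) eg.
by rewrite !mulmxA minor_linvK // mul1mx.
Qed.

Lemma stab_tensor_act y : stabT y -> rho y.1 *m T = T *m invmx (y.2)^T.
Proof.
case: y => g A [/= _ detA eA].
have uA : A^T \in unitmx by rewrite unitmx_tr unitmxE detA unitr1.
by rewrite -{2}eA /tensor_act mulmxK.
Qed.

Lemma stab_tensor_coef y : stabT y -> stab_coef y.1 = invmx (y.2)^T.
Proof.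
by move=> /stab_tensor_act e; rewrite /stab_coef -mulmxA e mulmxA minor_linvK // mul1mx.
Qed.

Lemma stab_tensor_wedge y : stabT y -> stabW y.1.
Proof.
move=> Ty; have e := stab_tensor_act Ty; case: Ty => Gg detA _.
split=> //; rewrite extpow_act_wedge e wedge_mulmxr.
by apply/ffunP => f; rewrite ffunE det_inv det_tr detA invr1 mul1r.
Qed.

(* The adjugate is the inverse on the stabiliser, and is polynomial in [rho g]. *)
Definition stab_lift g := (g, (\adj (stab_coef g))^T).

Lemma stab_lift_tensor g : stabW g -> stabT (stab_lift g).
Proof.
move=> Wg; have [eB detB] := stab_wedge_coef Wg; have [Gg _] := Wg.
split=> //=; first by rewrite det_tr -det1_invmx // det_inv detB invr1.
by rewrite /tensor_act /= trmxK eB -det1_invmx // mulmxK // stab_coef_unit.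
Qed.

Lemma stab_liftK y : stabT y -> stab_lift y.1 = y.
Proof.
case: y => g A Ty; rewrite /stab_lift /= (stab_tensor_coef Ty).
have [_ /= detA _] := Ty.
have detAT : \det (invmx A^T) = 1 by rewrite det_inv det_tr detA invr1.
by rewrite -det1_invmx // invmxK trmxK.
Qed.

Lemma stab_liftM g h :
  stabW g -> stabW h -> stab_lift (g *m h) = pair_mul (stab_lift g) (stab_lift h).
Proof.
move=> Wg Wh; have [_ dg] := stab_wedge_coef Wg; have [_ dh] := stab_wedge_coef Wh.
rewrite /stab_lift /pair_mul /= stab_coefM // -!det1_invmx ?det_mulmx ?dg ?dh ?mulr1 //.
by rewrite invmxM ?stab_coef_unit // trmx_mul.
Qed.

Lemma regular1_stab_lift i j : regular1 stabW (fun g => (stab_lift g).2 i j).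
Proof.
have W_det g : stabW g -> \det g != 0.
  by move=> [/G_unit]; rewrite unitmxE unitfE.
have reg_coef a b : regular1 stabW (fun g => stab_coef g a b).
  apply: regular1_mulmx => // [a' b'|a' b']; last exact: regular1_cst.
  apply: regular1_mulmx => // [a'' b''|a'' b'']; first exact: regular1_cst.
  by apply: sub_regular1 (rho_regular a'' b'') => g [].
apply: regular1_ext (_ : regular1 _ (fun g => (-1) ^+ (i + j) *
    \det (row' i (col' j (stab_coef g))))) => [g _|]; first by rewrite !mxE.
apply: regular1M; first exact: regular1_cst.
apply: regular1_det => // a b.
by apply: regular1_ext (reg_coef (lift i a) (lift j b)) => g _; rewrite !mxE.
Qed.

Theorem stab_wedge_tensor_iso : alg_group_iso stabW stabT.
Proof.
exists stab_lift, fst; split; split.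
- exact: stab_lift_tensor.
- exact: stab_tensor_wedge.
- by [].
- exact: stab_liftK.
- exact: stab_liftM.
- exact: regular1_entry.
- exact: regular1_stab_lift.
- move=> i j; exists 'X_(lshift (k * k) (mxvec_index i j)), 0%N, 0%N => y _.
  by rewrite !expr0 mulr1 divr1 mevalXU row_mxEl mxvecE.
Qed.

End Stabilizers.

Theorem lemma3p2 (R : realType) (c : RC) (m n k : nat)
    (G : 'M[FF R c]_m -> Prop) (rho : 'M[FF R c]_m -> 'M[FF R c]_n) :
  alg_group G ->
  rational_rep G rho ->
  (forall g, G g -> \det (rho g) = 1) ->
  (0 < k < n)%N ->
  forall T : 'M[FF R c]_(n, k), U_set T ->
    alg_group_iso (stab_wedge G rho T) (stab_tensor G rho T).
Proof.
move=> [[S G_eq] _ _ _] [_ rhoM rho_regular] _ _ T rkT.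
have G_unit g : G g -> g \in unitmx by move/G_eq => [].
have [f0 T_minor] := full_rank_unit_minor rkT.
exact (stab_wedge_tensor_iso G_unit rhoM rho_regular T_minor).
Qed.
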